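(* There is an instance of DCIC (for any $c_{\mathrm{Del}}\ge0$) in which every single-proposal mechanism with inspection has value at most $0$ while $\mathbb E[\mathrm{Opt}]\ge 1/2$; hence no such mechanism is $\beta$-approximate for any $\beta>0$. Concretely: each $X_i$ equals $1$ with probability $1/2$ and $0$ with probability $1/2$, and $c_i=1$ for all $i$.
   Context: Delegated choice with inspection cost (DCIC). There are $n$ alternatives indexed by $[n]=\{1,\dots,n\}$. Each alternative $i$ has a principal's utility $X_i\ge 0$ and an agent's utility $Y_i\ge 0$; the pairs $(X_i,Y_i)$, $i\in[n]$, are mutually independent random vectors (with $X_i$ and $Y_i$ possibly dependent), $X_i\sim D^X_i$, $Y_i\sim D^Y_i$. The principal knows the distributions $D^X_i$ but not the $D^Y_i$. Alternative $i$ has a deterministic inspection cost $c_i\ge 0$; delegating costs the principal $c_{\mathrm{Del}}\ge 0$. An inspection policy is a deterministic adaptive procedure which at each step, based on the already inspected alternatives and their revealed values $X_j$ (and on the agent's signal, if any), either inspects a not-yet-inspected alternative $i$ (paying $c_i$ and learning $X_i$), or selects one alternative $i$ (inspected or not) and stops, or stops selecting nothing. A (deterministic) mechanism either does not delegate and runs an inspection policy, or delegates: it pays $c_{\mathrm{Del}}$, fixes a signal set $\Sigma$ and a map $\mathrm{Sig}$ from $\Sigma$ to inspection policies; the agent observes all realizations $(X_i,Y_i)_{i\in[n]}$ and sends a signal $\sigma\in\Sigma$ maximizing his utility ($Y_k$ if alternative $k$ is finally selected by $\mathrm{Sig}(\sigma)$, $0$ if none is selected), breaking ties in favor of the principal (among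 signals giving him equal utility he sends one maximizing the principal's realized utility); the principal then runs $\mathrm{Sig}(\sigma)$. With $\mathbf A_i,\mathbf I_i\in\{0,1\}$ indicating that $i$ is selected / inspected and $\mathbf I_{\mathrm{Del}}\in\{0,1\}$ indicating delegation, the principal's realized utility is $\sum_{i}(\mathbf A_iX_i-\mathbf I_ic_i)-\mathbf I_{\mathrm{Del}}c_{\mathrm{Del}}$. The value $\mathbb E[M]$ of a mechanism $M$ is the infimum, over all agent utility distributions $(D^Y_i)_i$ (with the independence structure above), of the principal's expected realized utility. $\mathrm{Opt}$ denotes an optimal mechanism and $\mathbb E[\mathrm{Opt}]$ the supremum of $\mathbb E[M]$ over all mechanisms $M$. A single-proposal mechanism with inspection (SPMI) is a delegating mechanism with signal set $[n]\cup\{\perp\}$ in which, on signal $j\in[n]$, the principal inspects $j$ and then either selects $j$ or selects nothing according to an acceptance rule fixed in advance, and on signal $\perp$ nothing is inspected or selected. *)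

From HB Require Import structures.
From mathcomp Require Import all_boot all_order all_algebra.
From mathcomp Require Import all_classical all_reals all_analysis.
Set Implicit Arguments. Unset Strict Implicit. Unset Printing Implicit Defensive.
Import Order.TTheory GRing.Theory Num.Theory.
Local Open Scope classical_set_scope.
Local Open Scope ring_scope.

Section DCIC.
Variables (R : realType) (n : nat).

(** Deterministic adaptive inspection policies, as decision trees:
    [Inspect i k] inspects alternative [i] (paying [c_i]) and continues with
    [k x] where [x] is the revealed value [X_i];
    [Select i] selects alternative [i] (inspected or not) and stops;
    [Stop] stops selecting nothing. *)
Inductive policy : Type :=
| Inspect of 'I_n & (R -> policy)
| Select of 'I_n
| Stop.

Fixpoint wf_policy (S : {set 'I_n}) (p : policy) : Prop :=
  match p with
  | Inspect i k => i \notin S /\ forall x, wf_policy (i |: S) (k x)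
  | Select _ => True
  | Stop => True
  end.

Fixpoint run (p : policy) (x : 'I_n -> R) : option 'I_n * seq 'I_n :=
  match p with
  | Inspect i k => let: (s, l) := run (k (x i)) x in (s, i :: l)
  | Select i => (Some i, [::])
  | Stop => (None, [::])
  end.

Definition principal_util (c : 'I_n -> R) (p : policy) (x : 'I_n -> R) : R :=
  let: (s, l) := run p x in
  (match s with Some k => x k | None => 0 end) - \sum_(i <- l) c i.

Definition agent_util (p : policy) (x y : 'I_n -> R) : R :=
  match (run p x).1 with Some k => y k | None => 0 end.

Inductive mechanism : Type :=
| NoDelegate of policy
| Delegate (Sigma : Type) of (Sigma -> policy).

Definition wf_mechanism (M : mechanism) : Prop :=
  match M with
  | NoDelegate p => wf_policy (@finset.set0 _) p
  | Delegate Sigma Sig => inhabited Sigma /\ forall s, wf_policy (@finset.set0 _) (Sig s)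
  end.

(** When delegating, the agent sends a
    signal maximizing his utility, breaking ties in favour of the principal,
    i.e. the principal gets the maximum of her realized utility over the
    agent-optimal signals (this maximum exists since the agent's and the
    principal's utilities take finitely many values). *)
Definition realized_util (c : 'I_n -> R) (cDel : R) (M : mechanism)
    (x y : 'I_n -> R) : \bar R :=
  match M with
  | NoDelegate p => (principal_util c p x)%:E
  | Delegate Sigma Sig =>
      (ereal_sup [set (principal_util c (Sig s) x)%:E | s in
         [set s | forall s', (agent_util (Sig s') x y <= agent_util (Sig s) x y)%R]]
       - cDel%:E)%E
  end.

(** Admissible joint realizations: a probability space carrying random
    vectors [(X_i, Y_i)], with [X_i ~ DX_i], [Y_i >= 0], and the pairs
    [(X_i,Y_i)] mutually independent (product rule on measurable
    rectangles, which generate the product sigma-algebra). *)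
Definition admissible (DX : 'I_n -> set R -> \bar R)
    (d : measure_display) (Omega : measurableType d)
    (P : probability Omega R) (X Y : 'I_n -> Omega -> R) : Prop :=
  [/\ forall i, measurable_fun setT (X i),
      forall i, measurable_fun setT (Y i),
      forall i A, measurable A -> P (X i @^-1` A) = DX i A,
      forall i w, 0 <= Y i w &
      forall A B : 'I_n -> set R,
        (forall i, measurable (A i)) -> (forall i, measurable (B i)) ->
        P (\bigcap_(i in [set: 'I_n]) (X i @^-1` A i `&` Y i @^-1` B i)) =
        (\big[*%E/1%E]_(i < n) P (X i @^-1` A i `&` Y i @^-1` B i))%E].

(** Value of a mechanism: infimum over all agent utility distributions
    of the principal's expected realized utility. *)
Definition mech_value (DX : 'I_n -> set R -> \bar R) (c : 'I_n -> R) (cDel : R)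
    (M : mechanism) : \bar R :=
  ereal_inf [set e | exists (d : measure_display) (Omega : measurableType d)
      (P : probability Omega R) (X Y : 'I_n -> Omega -> R),
      admissible DX P X Y /\
      e = (\int[P]_w realized_util c cDel M (fun i => X i w) (fun i => Y i w))%E].

Definition opt_value (DX : 'I_n -> set R -> \bar R) (c : 'I_n -> R) (cDel : R)
    : \bar R :=
  ereal_sup [set e | exists M : mechanism,
    wf_mechanism M /\ e = mech_value DX c cDel M].

(** Single-proposal mechanism with inspection, with acceptance rule [acc]:
    signal set [[n] + {bot}] (here [option 'I_n], [None] = bot); on signal
    [j] inspect [j] and select it iff [acc j X_j]; on bot do nothing. *)
Definition spmi (acc : 'I_n -> R -> bool) : mechanism :=
  @Delegate (option 'I_n) (fun s => match s with
    | Some j => Inspect j (fun v => if acc j v then Select j else Stop)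
    | None => Stop end).

Definition beta_approx (beta : R) (DX : 'I_n -> set R -> \bar R) (c : 'I_n -> R)
    (cDel : R) (M : mechanism) : Prop :=
  (beta%:E * opt_value DX c cDel <= mech_value DX c cDel M)%E.

End DCIC.

Definition half_bernoulli (R : realType) (n : nat) : 'I_n -> set R -> \bar R :=
  fun _ A => ((2^-1)%:E * \d_(0%R:R) A + (2^-1)%:E * \d_(1%R:R) A)%E.

From HB Require Import structures.
From mathcomp Require Import all_boot all_order all_algebra.
From mathcomp Require Import all_classical all_reals all_analysis.
From mathcomp Require Import measurable_realfun.
Set Implicit Arguments. Unset Strict Implicit. Unset Printing Implicit Defensive.
Import Order.TTheory GRing.Theory Num.Theory.
Local Open Scope classical_set_scope.
Local Open Scope ring_scope.

(* Realize the X_i as independent fair coins and let the agent be indifferent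
   (Y_i = 0).  Tie-breaking in favour of the principal then lets her pick any
   signal, but a proposal costs 1 and yields at most 1, so the best signal of
   every single-proposal mechanism is bot, worth -cDel <= 0.  On the other
   hand, selecting alternative 1 blindly earns E[X_1] = 1/2 against every
   agent, so E[Opt] >= 1/2. *)

Definition bitvec (n : nat) := {ffun 'I_n -> bool}.
HB.instance Definition _ n := Finite.on (bitvec n).
HB.instance Definition _ n := isPointed.Build (bitvec n) [ffun=> false].
HB.instance Definition _ n := @isMeasurable.Build default_measure_display
  (bitvec n) discrete_measurable discrete_measurable0
  discrete_measurableC discrete_measurableU.

Section UniformBitvec.
Variables (R : realType) (n : nat).

Definition dirac_enum_bitvec (k : nat) : {measure set (bitvec n) -> \bar R} :=
  @dirac _ (bitvec n) (nth [ffun=> false] (enum (bitvec n)) k) R.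

Definition unif_bitvec :=
  mscale ((2^-1)^+n)%:nng (msum dirac_enum_bitvec #|bitvec n|).

Lemma unif_bitvecE (A : set (bitvec n)) :
  unif_bitvec A = ((2^-1)^+n * \sum_(f : bitvec n) (f \in A)%:R)%:E.
Proof.
rewrite /unif_bitvec /mscale /=; unfold msum; rewrite /dirac_enum_bitvec /=.
under eq_bigr do rewrite diracE.
rewrite sumEFin -EFinM cardE.
rewrite -(big_mkord xpredT (fun k => (nth [ffun=> false] (enum (bitvec n)) k \in A)%:R)).
by rewrite -(big_nth _ xpredT (fun f => (f \in A)%:R)) big_enum.
Qed.

Lemma unif_bitvec_setT : unif_bitvec setT = 1%E.
Proof.
rewrite unif_bitvecE; under eq_bigr do rewrite in_setT.
rewrite sumr_const card_ffun card_bool card_ord mulr1n natrX -exprMn.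
by rewrite mulVf ?expr1n ?pnatr_eq0.
Qed.

HB.instance Definition _ := Measure.on unif_bitvec.
HB.instance Definition _ :=
  Measure_isProbability.Build _ _ _ unif_bitvec unif_bitvec_setT.

Lemma unif_bitvec_box (T : 'I_n -> pred bool) :
  unif_bitvec [set f : bitvec n | forall i, T i (f i)] =
  (\prod_i ((T i true + T i false)%:R / 2))%:E.
Proof.
rewrite unif_bitvecE; congr (_%:E).
have -> : \sum_(f : bitvec n) (f \in [set f : bitvec n | forall i, T i (f i)])%:R =
          \sum_(f : {ffun 'I_n -> bool}) \prod_i ((T i (f i))%:R : R).
  apply: eq_bigr => f _.
  have [Tf|nTf] := pselect (forall i, T i (f i)).
    by rewrite mem_set // big1 // => i _; rewrite Tf.
  have [i /negbTE Tfi] : exists i, ~~ T i (f i).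
    by apply: contra_notP nTf => nTf i; apply/negPn/negP => Ti; apply: nTf; exists i.
  rewrite (bigD1 i) //= Tfi mul0r memNset // => Tf; by rewrite Tf in Tfi.
rewrite -(bigA_distr_bigA (fun i b => ((T i b)%:R : R))) /= big_split /=.
rewrite mulrC prodr_const card_ord; congr (_ * _).
by apply: eq_bigr => i _; rewrite big_bool natrD.
Qed.

Lemma unif_bitvec_coord (i : 'I_n) (p : pred bool) :
  unif_bitvec [set f : bitvec n | p (f i)] = ((p true + p false)%:R / 2)%:E.
Proof.
pose T j := if j == i then p else predT.
transitivity (unif_bitvec [set f : bitvec n | forall j, T j (f j)]).
  congr (unif_bitvec _); apply/seteqP; split => f /= => [pfi j|/(_ i)];
    rewrite /T; last by rewrite eqxx.
  by case: eqP => // ->.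
rewrite unif_bitvec_box (bigD1 i) //= /T eqxx big1 ?mulr1 // => j /negbTE -> /=.
by rewrite divff ?pnatr_eq0.
Qed.

Definition coin (i : 'I_n) (f : bitvec n) : R := (f i)%:R.

Lemma coin_admissible :
  admissible (@half_bernoulli R n) unif_bitvec coin (fun _ _ => 0).
Proof.
(* Unfolding [reverse_coercion] exposes [unif_bitvec] behind the probability
   structure, so that the rewriting lemmas above apply. *)
split => //.
- move=> i A _; rewrite /reverse_coercion /=.
  have -> : coin i @^-1` A = [set f : bitvec n | (fun b : bool => b%:R \in A) (f i)].
    by apply/seteqP; split => f; rewrite /coin /= in_setE.
  rewrite (unif_bitvec_coord i (fun b : bool => b%:R \in A)).
  rewrite /half_bernoulli !diracE -!EFinM -EFinD.
  by rewrite natrD mulrDl addrC !(mulrC _ 2^-1).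
- move=> A B _ _; rewrite /reverse_coercion /=.
  pose T i (b : bool) := (b%:R \in A i) && (0 \in B i).
  have boxE i : coin i @^-1` A i `&` (fun _ => 0) @^-1` B i =
                [set f : bitvec n | T i (f i)].
    apply/seteqP; split => f /=.
      by move=> [Af Bf]; apply/andP; split; rewrite in_setE.
    by move=> /andP[Af Bf]; split; rewrite -in_setE.
  under eq_bigr do rewrite boxE unif_bitvec_coord.
  rewrite prodEFin -unif_bitvec_box; congr (unif_bitvec _).
  apply/seteqP; split => f /= Tf i => [|_]; last by rewrite boxE; exact: Tf.
  by have := Tf i I; rewrite boxE.
Qed.

End UniformBitvec.

Section SingleProposal.
Variables (R : realType) (n : nat).
Implicit Types (c x : 'I_n -> R) (cDel : R).

Lemma agent_util_indifferent (p : policy R n) x :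
  agent_util p x (fun _ => 0) = 0.
Proof. by rewrite /agent_util; case: (run p x).1. Qed.

Lemma realized_util_indifferent c cDel (Sigma : Type) (Sig : Sigma -> policy R n) x :
  realized_util c cDel (Delegate Sig) x (fun _ => 0) =
  (ereal_sup [set (principal_util c (Sig s) x)%:E | s in setT] - cDel%:E)%E.
Proof.
congr (ereal_sup (_ @` _) - _)%E; apply/seteqP; split => // s _ s'.
by rewrite !agent_util_indifferent.
Qed.

Lemma realized_util_spmi_indifferent c cDel (acc : 'I_n -> R -> bool) x :
  (forall j, 0 <= c j) -> (forall j, x j <= c j) ->
  realized_util c cDel (spmi acc) x (fun _ => 0) = (- cDel)%:E.
Proof.
move=> c_ge0 x_le_c; rewrite realized_util_indifferent.
have bot_util : principal_util c (Stop R n) x = 0.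
  by rewrite /principal_util /= big_nil subr0.
set best := ereal_sup _; suff -> : best = 0%E by rewrite sub0e.
apply/le_anti/andP; split; last first.
  by apply: ereal_sup_ubound; exists None; rewrite //= bot_util.
apply: ge_ereal_sup => _ [[j|] _ <-] /=; rewrite ?bot_util // lee_fin.
rewrite /principal_util /=; case: (acc j (x j)) => /=;
  by rewrite big_cons big_nil addr0 ?sub0r ?oppr_le0 ?subr_le0.
Qed.

End SingleProposal.

Section HalfBernoulli.
Variables (R : realType) (n : nat) (d : measure_display) (Omega : measurableType d).
Variables (P : probability Omega R) (X Y : 'I_n -> Omega -> R).
Hypothesis XY_adm : admissible (@half_bernoulli R n) P X Y.

Let measurable_preimage i (A : set R) : measurable A -> measurable (X i @^-1` A).
Proof. by case: XY_adm => mX _ _ _ _ mA; rewrite -[_ @^-1` _]setTI; apply: mX. Qed.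

Lemma half_bernoulli_ae_indic i :
  ae_eq P setT (fun w => (X i w)%:E) (fun w => (\1_(X i @^-1` [set 1]) w)%:E).
Proof.
have m01 : measurable (~` ([set (0:R)] `|` [set 1])).
  by apply/measurableC/measurableU; exact: measurable_set1.
exists (X i @^-1` (~` ([set 0] `|` [set 1]))); split.
- exact: measurable_preimage.
- case: XY_adm => _ _ hX _ _; apply: eq_trans (hX i _ m01) _.
  rewrite /half_bernoulli !diracE !memNset ?mule0 ?adde0 //= => N;
    apply: N; by [left|right].
- move=> w /= Xw_ne [X0|X1]; apply: Xw_ne => _.
    by rewrite indicE memNset /= X0 //; apply/eqP; rewrite eq_sym oner_eq0.
  by rewrite indicE mem_set /= X1.
Qed.

Lemma half_bernoulli_expectation i : (\int[P]_w (X i w)%:E = (2^-1)%:E)%E.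
Proof.
have mX1 := measurable_preimage i (measurable_set1 (1 : R)).
case: XY_adm => mX _ hX _ _.
rewrite (ae_eq_integral _ _ _ _ _ (half_bernoulli_ae_indic i)) //.
- rewrite integral_indic // setIT; apply: eq_trans (hX i _ (measurable_set1 1)) _.
  rewrite /half_bernoulli !diracE memNset ?mem_set //= ?mule0 ?add0e ?mule1 //.
  by apply/eqP; rewrite eq_sym oner_eq0.
- by apply/measurable_EFinP; exact: mX.
- by apply/measurable_EFinP; exact: measurable_indic.
Qed.

End HalfBernoulli.

Section HalfBernoulliInstance.
Variables (R : realType) (n : nat).
Let DX := @half_bernoulli R n.

Lemma mech_value_select_half_bernoulli c cDel (i : 'I_n) :
  ((2^-1)%:E <= mech_value DX c cDel (NoDelegate (@Select R n i)))%E.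
Proof.
apply: le_ereal_inf_tmp => _ [d [T [P [X [Y [XY_adm ->]]]]]].
rewrite (eq_integral (fun w => (X i w)%:E)).
  by rewrite -(half_bernoulli_expectation XY_adm i).
by move=> w _; rewrite /realized_util /principal_util /= big_nil subr0.
Qed.

Lemma opt_value_half_bernoulli c cDel : (0 < n)%N ->
  ((2^-1)%:E <= opt_value DX c cDel)%E.
Proof.
move=> n_gt0; apply: le_trans (mech_value_select_half_bernoulli c cDel (Ordinal n_gt0)) _.
by apply: ereal_sup_ubound; exists (NoDelegate (@Select R n (Ordinal n_gt0))).
Qed.

Lemma mech_value_spmi_unit_cost (cDel : R) (acc : 'I_n -> R -> bool) :
  (mech_value DX (fun _ => 1%R) cDel (spmi acc) <= (- cDel)%:E)%E.
Proof.
apply: ereal_inf_lbound.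
exists default_measure_display, (bitvec n), (@unif_bitvec R n), (@coin R n).
exists (fun _ _ => 0).
split; first exact: coin_admissible.
transitivity (\int[@unif_bitvec R n]_w (cst (- cDel)%:E w))%E.
  by rewrite integral_cst //= probability_setT mule1.
apply: eq_integral => f _; rewrite realized_util_spmi_indifferent // => j.
by rewrite /coin; case: (f j); rewrite ?ler01.
Qed.

End HalfBernoulliInstance.

Lemma not_beta_approx (R : realType) (n : nat) (DX : 'I_n -> set R -> \bar R)
    (c : 'I_n -> R) (cDel beta : R) (M : mechanism R n) :
  0 < beta -> (0 < opt_value DX c cDel)%E -> (mech_value DX c cDel M <= 0)%E ->
  ~ beta_approx beta DX c cDel M.
Proof.
move=> beta_gt0 opt_gt0 M_le0 approx.
have : (0 < beta%:E * opt_value DX c cDel)%E by rewrite mule_gt0 // lte_fin.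
by rewrite ltNge (le_trans approx M_le0).
Qed.

Theorem mainTheorem11 (R : realType) (n : nat) (cDel : R) :
  (0 < n)%N -> 0 <= cDel ->
  let DX := @half_bernoulli R n in
  let c := fun _ : 'I_n => (1 : R) in
  [/\ (forall acc : 'I_n -> R -> bool, (mech_value DX c cDel (spmi acc) <= 0)%E),
      ((2^-1 : R)%:E <= opt_value DX c cDel)%E &
      (forall (beta : R), 0 < beta ->
         forall acc : 'I_n -> R -> bool, ~ beta_approx beta DX c cDel (spmi acc))].
Proof.
move=> n_gt0 cDel_ge0 DX c.
have spmi_le0 acc : (mech_value DX c cDel (spmi acc) <= 0)%E.
  by apply: le_trans (mech_value_spmi_unit_cost _ _) _; rewrite lee_fin oppr_le0.
have opt_ge_half := opt_value_half_bernoulli c cDel n_gt0.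
split=> // beta beta_gt0 acc; apply: not_beta_approx (spmi_le0 acc) => //.
by apply: lt_le_trans opt_ge_half; rewrite lte_fin invr_gt0.
Qed.
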